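(* Let $F$ be a field of characteristic two and let $(A,\sigma)$ be a totally decomposable central simple $F$-algebra with orthogonal involution. If $\alpha+\sum_{i=1}^m\sigma(x_i)x_i\in\mathrm{Alt}(A,\sigma)$ for some $\alpha\in F$ and $x_1,\dots,x_m\in A$, then $\alpha\in Q(\mathfrak{Pf}(A,\sigma))$.
   Context: Involutions are of the first kind. $(A,\sigma)$ is totally decomposable if $(A,\sigma)\simeq\bigotimes_{i=1}^n(Q_i,\sigma_i)$ with quaternion $F$-algebras with involution. $\mathrm{Alt}(A,\sigma)=\{\sigma(x)-x\mid x\in A\}$. The Pfister invariant $\mathfrak{Pf}(A,\sigma)$ is the bilinear Pfister form $\langle\!\langle\alpha_1,\dots,\alpha_n\rangle\!\rangle=\langle1,\alpha_1\rangle\otimes\cdots\otimes\langle1,\alpha_n\rangle$, where $\alpha_i\in F^\times$ represents $\mathrm{disc}\,\sigma_i\in F^\times/F^{\times2}$ (independent of the decomposition up to isometry). For a symmetric bilinear form $\mathfrak b$ on $V$, $Q(\mathfrak b)=\{\mathfrak b(v,v)\mid 0\ne v\in V\}\cup\{0\}$. *)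

From HB Require Import structures.
From mathcomp Require Import all_boot all_order all_algebra all_field.
Set Implicit Arguments. Unset Strict Implicit. Unset Printing Implicit Defensive.
Import GRing.Theory.
Local Open Scope ring_scope.

Section Defs.
Variables (F : fieldType) (A : falgType F).

Definition is_involution (sigma : A -> A) : Prop :=
  [/\ forall (k : F) (x y : A), sigma (k *: x + y) = k *: sigma x + sigma y,
      forall x y : A, sigma (x * y) = sigma y * sigma x
    & forall x : A, sigma (sigma x) = x].

Definition Alt (sigma : A -> A) (y : A) : Prop := exists x : A, y = sigma x - x.

(* Characteristic two: an involution is symplectic iff 1 \in Alt(A,sigma)
   (KMRT, Prop. 2.6); orthogonal = not symplectic. *)
Definition orthogonal_inv (sigma : A -> A) : Prop := ~ Alt sigma 1.

Definition quat_basis (u v : A) : 4.-tuple A := [tuple 1; u; v; u * v].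
Definition quat_span (u v : A) : {vspace A} := <<quat_basis u v>>%VS.

(* u, v generate a (4-dimensional) quaternion subalgebra [a,b)_F of A
   in characteristic 2: u^2 + u = a, v^2 = b <> 0, vu = (u+1)v *)
Definition is_quaternion_pair (u v : A) (a b : F) : Prop :=
  [/\ u * u + u = a%:A, v * v = b%:A, b != 0, v * u = (u + 1) * v
    & free (quat_basis u v)].

(* canonical (symplectic) involution of the quaternion algebra spanned by
   1,u,v,uv: x0 + x1 u + x2 v + x3 uv |-> x0 + x1 (u+1) + x2 v + x3 uv *)
Definition quat_canon (u v : A) (y : A) : A :=
  y + (coord (quat_basis u v) (inord 1) y)%:A.

Definition quat_Nrd (u v : A) (y : A) : A := y * quat_canon u v y.

(* (A, sigma) = (Q_1,sigma_1) (x) ... (x) (Q_n,sigma_n), with Q_i the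
   quaternion subalgebras generated by u_i, v_i (internal tensor product:
   sigma-stable, pairwise commuting, and dim A = 4^n). *)
Definition totally_decomposed (sigma : A -> A) (n : nat) (u v : 'I_n -> A)
    (a b : 'I_n -> F) : Prop :=
  [/\ forall i, is_quaternion_pair (u i) (v i) (a i) (b i),
      forall i, sigma (u i) \in quat_span (u i) (v i) /\
                sigma (v i) \in quat_span (u i) (v i),
      forall i j, i != j -> forall x y, x \in quat_span (u i) (v i) ->
                  y \in quat_span (u j) (v j) -> x * y = y * x
    & (\dim (fullv : {vspace A}) = 4 ^ n)%N].

(* d in F^x represents disc(sigma_i) in F^x/F^x2, sigma_i = sigma restricted
   to Q_i: disc sigma_i = Nrd(z) for an invertible z in Alt(Q_i, sigma_i). *)
Definition represents_disc (sigma : A -> A) (u v : A) (d : F) : Prop :=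
  d != 0 /\ exists2 x, x \in quat_span u v &
     quat_Nrd u v (sigma x - x) = d%:A.

End Defs.

(* The bilinear Pfister form <<d_1,...,d_n>> = (x)_i <1, d_i> is the diagonal
   form on F^(2^n) (basis indexed by subsets S of {1..n}) with entries
   prod_{i in S} d_i. *)
Definition pfister_entry (F : fieldType) (n : nat) (d : 'I_n -> F)
  (S : {set 'I_n}) : F := \prod_(i in S) d i.

Definition pfister_value (F : fieldType) (n : nat) (d : 'I_n -> F)
  (w : {set 'I_n} -> F) : F := \sum_(S : {set 'I_n}) pfister_entry d S * w S ^+ 2.

Definition Q_pfister (F : fieldType) (n : nat) (d : 'I_n -> F) (x : F) : Prop :=
  (exists2 w : {set 'I_n} -> F, (exists S, w S != 0) & x = pfister_value d w)
  \/ x = 0.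

(* In characteristic 2, an orthogonal involution sigma restricted to a sigma-stable
   quaternion factor Q has a one-dimensional space Alt(Q, sigma) = F z (a plane would
   contain 1), and an element z of it with Nrd z = d satisfies sigma(y) z = z gamma(y)
   on Q, gamma the canonical involution. This yields sigma-symmetric generators s, z
   of Q with s^2 = s + a', z^2 = d and zs = (s + 1)z. The 4^n monomials in the
   generators of all factors form a basis of A, and the tensor product phi of the
   functionals x0 + x1 s + x2 z + x3 sz |-> x0 + a' x1 satisfies phi(1) = 1 and
   phi o sigma = phi, so it vanishes on Alt(A, sigma). In characteristic 2 the map
   y |-> phi(sigma(y) y) is additive, and on monomials it takes the value 0 or a
   product of d_i's, so applying phi to alpha + sum sigma(x_i) x_i exhibits alpha as
   a value of the Pfister form <<d_1, ..., d_n>>. *)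

From HB Require Import structures.
From mathcomp Require Import all_boot all_order all_algebra all_field.
From mathcomp Require Import ring zify.
Import GRing.Theory.
Local Open Scope ring_scope.

Set Implicit Arguments. Unset Strict Implicit. Unset Printing Implicit Defensive.

Section QuaternionCoordinates.
Variables (F : fieldType) (A : falgType F).

Record quat := Quat { q0 : F; q1 : F; q2 : F; q3 : F }.

Definition quat_add (x y : quat) : quat :=
  Quat (q0 x + q0 y) (q1 x + q1 y) (q2 x + q2 y) (q3 x + q3 y).
Definition quat_scale (c : F) (x : quat) : quat :=
  Quat (c * q0 x) (c * q1 x) (c * q2 x) (c * q3 x).

Definition quat_coord (j : nat) (x : quat) : F :=
  match j with 0 => q0 x | 1 => q1 x | 2 => q2 x | _ => q3 x end.
Definition quat_unit (j : nat) : quat :=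
  match j with
  | 0 => Quat 1 0 0 0 | 1 => Quat 0 1 0 0 | 2 => Quat 0 0 1 0 | _ => Quat 0 0 0 1
  end.

Lemma quat_coord_unit (j k : 'I_4) : quat_coord j (quat_unit k) = (j == k)%:R.
Proof. by case: j k => [[|[|[|[|j]]]] hj] [[|[|[|[|k]]]] hk]. Qed.

(* Multiplication in the basis 1, u, v, uv of the algebra presented by
   u^2 = a + u, v^2 = b, vu = v - uv (in characteristic 2: vu = (u + 1)v). *)
Definition quat_mul (a b : F) (x y : quat) : quat :=
  let: Quat x0 x1 x2 x3 := x in let: Quat y0 y1 y2 y3 := y in
  Quat (x0*y0 + a*x1*y1 + b*x2*y2 + b*x2*y3 - a*b*x3*y3)
       (x0*y1 + x1*y0 + x1*y1 - b*x2*y3 + b*x3*y2)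
       (x0*y2 + x2*y0 + a*x1*y3 + x2*y1 - a*x3*y1)
       (x0*y3 + x3*y0 + x1*y2 + x1*y3 - x2*y1).

Section Presentation.
Variables (u v : A) (a b : F).

Fact qemb_key : unit. Proof. by []. Qed.
Definition qemb : quat -> A := locked_with qemb_key
  (fun x => (q0 x)%:A + q1 x *: u + q2 x *: v + q3 x *: (u * v)).

Lemma qembE x : qemb x = (q0 x)%:A + q1 x *: u + q2 x *: v + q3 x *: (u * v).
Proof. by rewrite /qemb unlock. Qed.

Lemma qembD x y : qemb (quat_add x y) = qemb x + qemb y.
Proof.
rewrite !qembE /= !scalerDl [RHS]addrACA; congr (_ + _).
by rewrite [RHS]addrACA; congr (_ + _); rewrite [RHS]addrACA.
Qed.

Lemma qembZ c x : qemb (quat_scale c x) = c *: qemb x.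
Proof. by rewrite !qembE /= !scalerDr !scalerA -scalerA. Qed.

Lemma qemb_scalar c : qemb (Quat c 0 0 0) = c%:A.
Proof. by rewrite qembE /= !scale0r !addr0. Qed.

Lemma qemb1 : qemb (Quat 1 0 0 0) = 1.
Proof. by rewrite qemb_scalar scale1r. Qed.
Lemma qemb_u : qemb (Quat 0 1 0 0) = u.
Proof. by rewrite qembE /= !scale0r scale1r add0r !addr0. Qed.
Lemma qemb_v : qemb (Quat 0 0 1 0) = v.
Proof. by rewrite qembE /= !scale0r scale1r !add0r addr0. Qed.
Lemma qemb_uv : qemb (Quat 0 0 0 1) = u * v.
Proof. by rewrite qembE /= !scale0r scale1r !add0r. Qed.

Lemma qemb_unit_sum x : qemb x = \sum_(k < 4) quat_coord k x *: qemb (quat_unit k).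
Proof.
rewrite !big_ord_recl big_ord0 addr0 /= -!qembZ -!qembD.
by case: x => x0 x1 x2 x3; rewrite /quat_add /quat_scale /=; congr (qemb (Quat _ _ _ _)); ring.
Qed.

Lemma comm_qemb r x : GRing.comm r u -> GRing.comm r v -> GRing.comm r (qemb x).
Proof.
move=> ru rv; have ruv : GRing.comm r (u * v) by apply: commrM.
by rewrite /GRing.comm qembE !mulrDl !mulrDr -!scalerAl -!scalerAr mul1r mulr1 ru rv ruv.
Qed.

Hypotheses (uu : u * u = a%:A + u) (vv : v * v = b%:A) (vu : v * u = v - u * v).

Lemma qemb_mul_u y :
  u * qemb y = qemb (Quat (a * q1 y) (q0 y + q1 y) (a * q3 y) (q2 y + q3 y)).
Proof.
rewrite [in LHS]qembE !mulrDr mulr_algr -!scalerAr mulrA uu mulrDl mulr_algl.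
rewrite -qemb_uv -qemb1 -qemb_u -qemb_v !scalerDr !scalerA -!qembZ -!qembD.
by case: y => y0 y1 y2 y3; rewrite /quat_add /quat_scale /=; congr (qemb (Quat _ _ _ _)); ring.
Qed.

Lemma qemb_mul_v y :
  v * qemb y = qemb (Quat (b * (q2 y + q3 y)) (- b * q3 y) (q0 y + q1 y) (- q1 y)).
Proof.
rewrite [in LHS]qembE !mulrDr mulr_algr -!scalerAr mulrA vu vv mulrBl -mulrA vv.
rewrite mulr_algr -qemb_uv -qemb1 -qemb_u -qemb_v -scaleN1r.
rewrite !(scalerDr, scalerBr) !scalerA -!scaleNr -!qembZ -!qembD.
by case: y => y0 y1 y2 y3; rewrite /quat_add /quat_scale /=; congr (qemb (Quat _ _ _ _)); ring.
Qed.

Lemma qembM x y : qemb (quat_mul a b x y) = qemb x * qemb y.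
Proof.
rewrite [qemb x]qembE !mulrDl mulr_algl -!scalerAl -mulrA.
rewrite qemb_mul_v !qemb_mul_u -!qembZ -!qembD.
case: x => x0 x1 x2 x3; case: y => y0 y1 y2 y3; rewrite /quat_add /quat_scale /=.
by congr (qemb (Quat _ _ _ _)); ring.
Qed.

Definition quat_trace (x : quat) : F := 2 * q0 x + q1 x.

(* quat_dual j is b(4a+1) times the j-th vector of the basis dual to
   1, u, v, uv for the trace form (x, y) |-> quat_trace (xy), whose
   discriminant is b(4a+1). *)
Definition quat_dual (j : nat) : quat :=
  match j with
  | 0 => Quat (b * (2 * a + 1)) (- b) 0 0 | 1 => Quat (- b) (2 * b) 0 0
  | 2 => Quat 0 0 (2 * a) 1 | _ => Quat 0 0 1 (-2)
  end.

Lemma quat_trace_dual j y : (j < 4)%N ->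
  quat_trace (quat_mul a b (quat_dual j) y) = b * (4 * a + 1) * quat_coord j y.
Proof. by case: y => y0 y1 y2 y3; case: j => [|[|[|[|]]]] // _; rewrite /quat_trace /=; ring. Qed.

Lemma qemb_sandwich x :
  \sum_(k < 4) qemb (quat_unit k) * qemb x * qemb (quat_dual k) =
  (b * (4 * a + 1) * quat_trace x)%:A.
Proof.
rewrite !big_ord_recl big_ord0 addr0 -!qembM -!qembD -qemb_scalar /quat_trace.
by case: x => x0 x1 x2 x3; rewrite /quat_add /=; congr (qemb (Quat _ _ _ _)); ring.
Qed.

Definition quat_extract (j : nat) (w : A) : A :=
  \sum_(k < 4) qemb (quat_unit k) * qemb (quat_dual j) * w * qemb (quat_dual k).

Fact quat_extract_is_linear j : linear (quat_extract j).
Proof.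
move=> c w w'; rewrite /quat_extract scaler_sumr -big_split /=; apply: eq_bigr => k _.
by rewrite mulrDr !mulrDl -!scalerAr -!scalerAl.
Qed.
HB.instance Definition _ j :=
  GRing.isLinear.Build F A A *:%R (quat_extract j) (quat_extract_is_linear j).

Lemma quat_extract_qemb r j y : GRing.comm r u -> GRing.comm r v -> (j < 4)%N ->
  quat_extract j (qemb y * r) = (quat_coord j y * (b * (4 * a + 1)) ^+ 2) *: r.
Proof.
move=> ru rv hj; rewrite /quat_extract.
under eq_bigr => k _ do
  rewrite !mulrA -(mulrA _ r) (comm_qemb _ ru rv) mulrA -(mulrA (qemb (quat_unit k))) -qembM.
rewrite -mulr_suml qemb_sandwich quat_trace_dual // mulr_algl.
by congr (_ *: r); ring.
Qed.

End Presentation.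
End QuaternionCoordinates.

Arguments quat_unit {F} j.

Section PfisterRepresentation.
Variables (F : fieldType) (n : nat) (d : 'I_n -> F).

Definition pfister_represents (x : F) : Prop := exists w, x = pfister_value d w.

Lemma Q_pfister_represents x : pfister_represents x -> Q_pfister d x.
Proof.
case=> w ->; have [/existsP[S wS]|/existsPn w0] := boolP [exists S, w S != 0].
  by left; exists w => //; exists S.
right; rewrite /pfister_value big1 // => S _.
by rewrite (eqP (negbNE (w0 S))) expr0n mulr0.
Qed.

Lemma pfister_represents0 : pfister_represents 0.
Proof.
by exists (fun _ => 0); rewrite /pfister_value big1 // => S _; rewrite expr0n mulr0.
Qed.

Lemma pfister_representsZ c x : pfister_represents x -> pfister_represents (c ^+ 2 * x).
Proof.
case=> w ->; exists (fun S => c * w S).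
by rewrite /pfister_value mulr_sumr; apply: eq_bigr => S _; rewrite exprMn mulrCA.
Qed.

Lemma pfister_represents_entry S : pfister_represents (pfister_entry d S).
Proof.
exists (fun T => (T == S)%:R); rewrite /pfister_value (bigD1 S) //= eqxx expr1n mulr1.
by rewrite big1 ?addr0 // => T /negbTE ->; rewrite expr0n mulr0.
Qed.

Hypothesis F_char2 : 2 \in [pchar F].

(* Squaring is additive in characteristic 2. *)
Lemma pfister_representsD x y :
  pfister_represents x -> pfister_represents y -> pfister_represents (x + y).
Proof.
case=> w ->; case=> w' ->; exists (fun S => w S + w' S).
rewrite /pfister_value -big_split /=; apply: eq_bigr => S _.
by rewrite sqrrD -mulr_natr (pcharf0 F_char2) mulr0 addr0 mulrDr.
Qed.

Lemma pfister_represents_sum I (r : seq I) (P : pred I) (G : I -> F) :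
  (forall i, P i -> pfister_represents (G i)) ->
  pfister_represents (\sum_(i <- r | P i) G i).
Proof.
by move=> PG; elim/big_ind: _ => //; [apply: pfister_represents0 | apply: pfister_representsD].
Qed.

End PfisterRepresentation.

Section Char2Involution.
Variables (F : fieldType) (A : falgType F) (sigma : A -> A).
Hypotheses (F_char2 : 2 \in [pchar F]) (sigma_linear : linear sigma)
  (sigmaM : forall x y, sigma (x * y) = sigma y * sigma x) (sigmaK : involutive sigma).

HB.instance Definition _ := GRing.isLinear.Build F A A *:%R sigma sigma_linear.

Let A_char2 : 2 \in [pchar A]. Proof. by rewrite pchar_lalg. Qed.
Let two0 : 2%:R = 0 :> F. Proof. exact: pcharf0 F_char2. Qed.

Lemma sigma1 : sigma 1 = 1.
Proof. by rewrite -[sigma 1]mulr1 -{2}[1]sigmaK -sigmaM mulr1 sigmaK. Qed.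

Definition sigma_alt (y : A) : A := sigma y - y.

Fact sigma_alt_is_linear : linear sigma_alt.
Proof. by move=> c y y'; rewrite /sigma_alt linearP scalerBr addrACA opprD. Qed.
HB.instance Definition _ :=
  GRing.isLinear.Build F A A *:%R sigma_alt sigma_alt_is_linear.

Lemma sigma_altK y : sigma_alt (sigma_alt y) = 0.
Proof. by rewrite /sigma_alt linearB /= sigmaK opprB addrr_pchar2. Qed.

Lemma sigma_sigma_alt y : sigma (sigma_alt y) = sigma_alt y.
Proof. by rewrite /sigma_alt linearB /= sigmaK -opprB oppr_pchar2. Qed.

Section QuaternionSubalgebra.
Hypothesis sigma_orth : orthogonal_inv sigma.
Variables (u v : A) (a b : F).
Hypotheses (uv_quat : is_quaternion_pair u v a b)
  (sigma_u : sigma u \in quat_span u v) (sigma_v : sigma v \in quat_span u v).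

Local Notation Q := (quat_span u v).
Local Notation qemb := (qemb u v).
(* The u-coordinate of y is its reduced trace. *)
Local Notation Trd y := (coord (quat_basis u v) (inord 1) y).

Let uu : u * u = a%:A + u.
Proof. by case: uv_quat => <- *; rewrite addrK_pchar2. Qed.
Let vv : v * v = b%:A.
Proof. by case: uv_quat. Qed.
Let vu : v * u = v - u * v.
Proof. by case: uv_quat => _ _ _ -> _; rewrite mulrDl mul1r oppr_pchar2 // addrC. Qed.
Let basis_free : free (quat_basis u v).
Proof. by case: uv_quat. Qed.

Lemma quat_basis_qemb (k : 'I_4) : (quat_basis u v)`_k = qemb (quat_unit k).
Proof.
by case: k => [[|[|[|[|k]]]] hk] //=; rewrite ?qemb1 ?qemb_u ?qemb_v ?qemb_uv.
Qed.

Lemma qemb_basis_sum x : qemb x = \sum_(k < 4) quat_coord k x *: (quat_basis u v)`_k.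
Proof. by rewrite qemb_unit_sum; apply: eq_bigr => k _; rewrite quat_basis_qemb. Qed.

Lemma qemb_in x : qemb x \in Q.
Proof. by rewrite qemb_basis_sum memv_suml // => k _; rewrite memvZ // memv_span ?mem_nth. Qed.

Lemma quat_span_qemb y : y \in Q -> exists x, y = qemb x.
Proof.
move/coord_span => ->; rewrite !big_ord_recl big_ord0 addr0 !quat_basis_qemb.
by rewrite -!qembZ -!qembD; eexists.
Qed.

Lemma coord_qemb (j : 'I_4) x : coord (quat_basis u v) j (qemb x) = quat_coord j x.
Proof. by rewrite qemb_basis_sum coord_sum_free. Qed.

Lemma Trd_qemb x : Trd (qemb x) = q1 x.
Proof. by rewrite coord_qemb inordK. Qed.

Lemma qemb_inj : injective qemb.
Proof.
move=> x y exy; have c (j : 'I_4) : quat_coord j x = quat_coord j y by rewrite -!coord_qemb exy.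
have := c (inord 0); have := c (inord 1); have := c (inord 2); have := c (inord 3).
by rewrite !inordK //; case: x {exy c} => ? ? ? ?; case: y => ? ? ? ? /= -> -> -> ->.
Qed.

Lemma quat_span1 : 1 \in Q.
Proof. by rewrite -(qemb1 u v) qemb_in. Qed.

Lemma quat_spanM y y' : y \in Q -> y' \in Q -> y * y' \in Q.
Proof.
by move=> /quat_span_qemb[x ->] /quat_span_qemb[x' ->]; rewrite -(qembM uu vv vu) qemb_in.
Qed.

Lemma quat_span_sigma y : y \in Q -> sigma y \in Q.
Proof.
move=> /quat_span_qemb[x ->]; rewrite qembE !linearD !linearZ /= sigma1 sigmaM.
by rewrite !memvD ?memvZ ?quat_span1 ?quat_spanM.
Qed.

Lemma quat_canon_qemb x :
  quat_canon u v (qemb x) = qemb (Quat (q0 x + q1 x) (q1 x) (q2 x) (q3 x)).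
Proof. by rewrite /quat_canon Trd_qemb -(qemb_scalar u v) -qembD /quat_add /= !addr0. Qed.

Lemma quat_Nrd_scalar y : y \in Q -> exists N, quat_Nrd u v y = N%:A.
Proof.
move=> /quat_span_qemb[[x0 x1 x2 x3] ->]; rewrite /quat_Nrd quat_canon_qemb -(qembM uu vv vu) /=.
eexists; rewrite -(qemb_scalar u v); congr (qemb (Quat _ _ _ _)).
all: ring: two0.
Qed.

Local Notation altQ := (linfun sigma_alt @: Q)%VS.

Lemma altQ_sub : (altQ <= Q :&: lker (linfun sigma_alt))%VS.
Proof.
apply/subvP => _ /memv_imgP[y y_in ->].
by rewrite memv_cap memv_ker !lfunE /= sigma_altK eqxx memvB ?quat_span_sigma.
Qed.

Lemma dim_altQ : (\dim altQ <= 1)%N.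
Proof.
rewrite leqNgt; apply/negP => dim_gt1.
have dimQ : \dim Q = 4%N by case: uv_quat => _ _ _ _ /eqP.
have alt_eq : altQ = (Q :&: lker (linfun sigma_alt))%VS.
  apply/eqP; rewrite eqEdim altQ_sub /=.
  by have := limg_ker_dim (linfun sigma_alt) Q; rewrite dimQ; lia.
have : 1 \in altQ.
  by rewrite alt_eq memv_cap quat_span1 memv_ker lfunE /= /sigma_alt sigma1 subrr.
by case/memv_imgP => w _; rewrite lfunE => one_alt; apply: sigma_orth; exists w.
Qed.

Section DiscriminantWitness.
Variables (d : F) (z : A).
Hypotheses (z_alt : z \in altQ) (d_neq0 : d != 0) (Nrd_z : quat_Nrd u v z = d%:A).

Lemma z_in : z \in Q.
Proof. by have /subvP/(_ z z_alt) := altQ_sub; rewrite memv_cap => /andP[]. Qed.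

Lemma sigma_z : sigma z = z.
Proof. by case/memv_imgP: z_alt => y _ ->; rewrite lfunE /= sigma_sigma_alt. Qed.

Lemma lreg_z : GRing.lreg z.
Proof.
have canon_z : quat_canon u v z * z = d%:A.
  by rewrite -Nrd_z /quat_Nrd; symmetry; apply: commrD => //; apply/commr_sym/comm_alg.
move=> y y' /(congr1 (GRing.mul (quat_canon u v z))).
by rewrite !mulrA canon_z !mulr_algl; apply: scalerI.
Qed.

Lemma altQ_line w : w \in Q -> exists k, sigma_alt w = k *: z.
Proof.
have line_eq : (<[z]> == altQ)%VS.
  by rewrite eqEdim -memvE dim_vline (lreg_neq0 lreg_z) dim_altQ andbT.
move=> w_in; apply/vlineP; rewrite (eqP line_eq).
by have := memv_img (linfun sigma_alt) w_in; rewrite lfunE.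
Qed.

Lemma sigma_mul_z w : w \in Q -> exists k, sigma w * z = k *: z + z * w.
Proof.
move=> w_in; have [k hk] := altQ_line (quat_spanM z_in w_in).
by exists k; rewrite -hk subrK sigmaM sigma_z.
Qed.

(* sigma_mul_z gives scalars k1, k2, k3 for u, v and uv; expanding
   sigma (uv) = sigma v * sigma u and cancelling z forces k1 = 1 and k2 = 0. *)
Lemma sigma_gens_z : sigma u * z = z * (u + 1) /\ sigma v * z = z * v.
Proof.
have u_in : u \in Q by rewrite memv_span // !inE eqxx orbT.
have v_in : v \in Q by rewrite memv_span // !inE eqxx !orbT.
have [k1 h1] := sigma_mul_z u_in.
have [k2 h2] := sigma_mul_z v_in.
have [k3 h3] := sigma_mul_z (quat_spanM u_in v_in).
have : z * (k3%:A + u * v) = z * ((k1 * k2)%:A + k1 *: v + k2 *: u + v * u).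
  rewrite mulrDr mulr_algr -h3 sigmaM -mulrA h1 mulrDr -scalerAr (mulrA (sigma v)) h2.
  rewrite !mulrDr !mulrDl !mulr_algr !scalerDr -!scalerAl -!mulrA !scalerA.
  by rewrite -!scalerAr !addrA.
have -> : k3%:A + u * v = qemb (Quat k3 0 0 1).
  by rewrite qembE /= !scale0r !addr0 scale1r.
have -> : (k1 * k2)%:A + k1 *: v + k2 *: u + v * u = qemb (Quat (k1 * k2) k2 (k1 + 1) (-1)).
  by rewrite qembE /= vu scalerDl scale1r scaleN1r (addrAC _ (k1 *: v)) !addrA.
move=> /lreg_z /qemb_inj [_ k2_eq k1_eq _].
have k1_1 : k1 = 1 by apply/eqP; rewrite -subr_eq0 oppr_pchar2 // -k1_eq.
by rewrite h1 h2 k1_1 -k2_eq scale0r add0r scale1r mulrDr mulr1 addrC.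
Qed.

Lemma sigma_z_canon y : y \in Q -> sigma y * z = z * quat_canon u v y.
Proof.
have [zu zv] := sigma_gens_z; have v_u1 : v * (u + 1) = u * v.
  by rewrite mulrDr mulr1 vu addrAC addrr_pchar2 // add0r oppr_pchar2.
move=> /quat_span_qemb[x ->]; rewrite quat_canon_qemb !qembE /= !linearD !linearZ /= sigma1.
rewrite sigmaM !mulrDl -!scalerAl mul1r -mulrA zu mulrA zv -mulrA v_u1.
rewrite !mulrDr -!scalerAr !mulr1 !scalerDr scalerDl !addrA.
by rewrite (addrAC (q0 x *: z) (q1 x *: (z * u))).
Qed.

Lemma quat_canon_z : quat_canon u v z = z.
Proof. by apply: lreg_z; rewrite -sigma_z_canon ?z_in // sigma_z. Qed.

Lemma z_sqr : z * z = d%:A.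
Proof. by rewrite -{2}quat_canon_z. Qed.

Lemma Trd_z : Trd z = 0.
Proof.
have := quat_canon_z; rewrite /quat_canon => /(canRL (addKr z)); rewrite addNr.
by move/eqP; rewrite scaler_eq0 oner_eq0 orbF => /eqP.
Qed.

Lemma symmetric_s_of w : w \in Q -> Trd w = 0 -> Trd (z * w) != 0 ->
  exists s a', [/\ s \in Q, s * s = a'%:A + s, z * s = z - s * z & sigma s = s].
Proof.
move=> w_in Trd_w Trd_zw; pose s := (Trd (z * w))^-1 *: (z * w).
have s_in : s \in Q by rewrite memvZ // quat_spanM ?z_in.
have sigma_s : sigma s = s.
  by rewrite linearZ /= sigmaM sigma_z sigma_z_canon // /quat_canon Trd_w scale0r addr0.
have canon_s : quat_canon u v s = s + 1.
  by rewrite /quat_canon linearZ /= mulVf // scale1r.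
have [N Nrd_s] := quat_Nrd_scalar s_in.
exists s, N; split => //.
- by rewrite -Nrd_s /quat_Nrd canon_s mulrDr mulr1 -addrA addrr_pchar2 // addr0.
- have s_z : s * z = z * s + z.
    by rewrite -[in LHS]sigma_s sigma_z_canon // canon_s mulrDr mulr1.
  by rewrite s_z oppr_pchar2 // addrCA addrr_pchar2 // addr0.
Qed.

Lemma trace_pairing_witness : exists2 w, w \in Q & (Trd w == 0) && (Trd (z * w) != 0).
Proof.
have [t z_t] := quat_span_qemb z_in.
have t1_0 : q1 t = 0 by rewrite -Trd_qemb -z_t Trd_z.
have Trd_zq x : Trd (z * qemb x) = q1 (quat_mul a b t x).
  by rewrite z_t -(qembM uu vv vu) Trd_qemb.
have b_neq0 : b != 0 by case: uv_quat.
have [t3_0|t3_neq0] := eqVneq (q3 t) 0; last first.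
  exists (qemb (Quat 0 0 1 0)); rewrite ?qemb_in // Trd_qemb Trd_zq eqxx andTb.
  have -> : q1 (quat_mul a b t (Quat 0 0 1 0)) = b * q3 t.
    by case: t {z_t Trd_zq t3_neq0} t1_0 => ? ? ? ? /= ->; ring.
  by rewrite mulf_neq0.
have [t2_0|t2_neq0] := eqVneq (q2 t) 0; last first.
  exists (qemb (Quat 0 0 0 1)); rewrite ?qemb_in // Trd_qemb Trd_zq eqxx andTb.
  have -> : q1 (quat_mul a b t (Quat 0 0 0 1)) = - b * q2 t.
    by case: t {z_t Trd_zq t2_neq0} t1_0 t3_0 => ? ? ? ? /= -> ->; ring.
  by rewrite mulf_neq0 ?oppr_eq0.
(* Otherwise z is a nonzero scalar and sigma u = u + 1, making sigma symplectic. *)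
have z_scalar : z = (q0 t)%:A.
  by rewrite z_t -(qemb_scalar u v); case: t {z_t Trd_zq} t1_0 t2_0 t3_0 => ? ? ? ? /= -> -> ->.
have t0_neq0 : q0 t != 0.
  by apply: contraTneq (lreg_neq0 lreg_z) => t0_0; rewrite z_scalar t0_0 scale0r eqxx.
have [+ _] := sigma_gens_z; rewrite z_scalar mulr_algr mulr_algl => /(scalerI t0_neq0) sigma_u1.
by exfalso; apply: sigma_orth; exists u; rewrite sigma_u1 addrAC subrr add0r.
Qed.

End DiscriminantWitness.

Lemma symmetric_quat_gens d : represents_disc sigma u v d ->
  exists s z a', [/\ s \in Q, z \in Q, s * s = a'%:A + s, z * z = d%:A &
    [/\ z * s = z - s * z, sigma s = s & sigma z = z]].
Proof.
case=> d_neq0 [x0 x0_in Nrd_z].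
have z_alt : sigma x0 - x0 \in altQ by have := memv_img (linfun sigma_alt) x0_in; rewrite lfunE.
have [w w_in /andP[/eqP Trd_w Trd_zw]] := trace_pairing_witness z_alt d_neq0 Nrd_z.
have [s [a' [s_in ss zs sigma_s]]] := symmetric_s_of z_alt d_neq0 Nrd_z w_in Trd_w Trd_zw.
exists s, (sigma x0 - x0), a'.
by rewrite (z_in z_alt) (z_sqr z_alt d_neq0 Nrd_z) (sigma_z z_alt).
Qed.

End QuaternionSubalgebra.

Section SymmetricPresentation.
Variables (n : nat) (s z : 'I_n -> A) (a d : 'I_n -> F).
Hypotheses (ss : forall i, s i * s i = (a i)%:A + s i) (zz : forall i, z i * z i = (d i)%:A)
  (zs : forall i, z i * s i = z i - s i * z i) (d_neq0 : forall i, d i != 0)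
  (sigma_s : forall i, sigma (s i) = s i) (sigma_z : forall i, sigma (z i) = z i).
Hypothesis comm_gens : forall i j, i != j ->
  [/\ GRing.comm (s i) (s j), GRing.comm (s i) (z j),
      GRing.comm (z i) (s j) & GRing.comm (z i) (z j)].
Hypothesis dimA : \dim (fullv : {vspace A}) = (4 ^ n)%N.

Local Notation E i := (qemb (s i) (z i)).
Local Notation extract i j := (quat_extract (s i) (z i) (a i) (d i) j).

Lemma comm_E i j x y : i != j -> GRing.comm (E i x) (E j y).
Proof. by case/comm_gens=> *; apply/commr_sym/comm_qemb; apply/commr_sym/comm_qemb. Qed.

Lemma comm_E_prod i x (r : seq 'I_n) (f : 'I_n -> quat F) :
  i \notin r -> GRing.comm (E i x) (\prod_(j <- r) E j (f j)).
Proof.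
move=> i_r; rewrite big_seq; apply: commr_prod => j j_r.
by apply: comm_E; apply: contraNneq i_r => ->.
Qed.

Lemma mul_prod_E (r : seq 'I_n) (f g : 'I_n -> quat F) : uniq r ->
  \prod_(i <- r) E i (f i) * \prod_(i <- r) E i (g i) =
  \prod_(i <- r) E i (quat_mul (a i) (d i) (f i) (g i)).
Proof.
elim: r => [|i r IH]; first by rewrite !big_nil mul1r.
case/andP=> i_r r_uniq; rewrite !big_cons qembM // -IH // -!mulrA; congr (_ * _).
by rewrite !mulrA (comm_E_prod _ _ i_r).
Qed.

Definition monomial (K : {ffun 'I_n -> 'I_4}) : A := \prod_(i < n) E i (quat_unit (K i)).

Lemma prod_E_monomials (f : 'I_n -> quat F) :
  \prod_(i < n) E i (f i) =
  \sum_(K : {ffun 'I_n -> 'I_4}) (\prod_(i < n) quat_coord (K i) (f i)) *: monomial K.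
Proof.
under eq_bigr do rewrite qemb_unit_sum.
by rewrite bigA_distr_bigA; apply: eq_bigr => K _; rewrite scaler_prod.
Qed.

Fixpoint extract_seq (K : {ffun 'I_n -> 'I_4}) (r : seq 'I_n) (w : A) : A :=
  if r is i :: r' then extract_seq K r' (extract i (K i) w) else w.

Fact extract_seq_is_linear K r : linear (extract_seq K r).
Proof. by elim: r => [//|i r IH] c w w' /=; rewrite linearP IH. Qed.
HB.instance Definition _ K r :=
  GRing.isLinear.Build F A A *:%R (extract_seq K r) (extract_seq_is_linear K r).

Lemma extract_seq_prod K (r : seq 'I_n) (f : 'I_n -> 'I_4) : uniq r ->
  extract_seq K r (\prod_(i <- r) E i (quat_unit (f i))) =
  (\prod_(i <- r) ((K i == f i)%:R * (d i * (4 * a i + 1)) ^+ 2)) *: 1.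
Proof.
elim: r => [|i r IH]; first by rewrite !big_nil scale1r.
case/andP=> i_r r_uniq; rewrite !big_cons /= quat_extract_qemb //.
- by rewrite linearZ /= IH // scalerA quat_coord_unit.
- by apply/commr_sym; rewrite -(qemb_u (s i) (z i)); apply: comm_E_prod.
- by apply/commr_sym; rewrite -(qemb_v (s i) (z i)); apply: comm_E_prod.
Qed.

Local Notation N := #|{ffun 'I_n -> 'I_4}|.

Definition monomials : N.-tuple A := [tuple monomial (enum_val l) | l < N].

Lemma monomialsE (l : 'I_N) : monomials`_l = monomial (enum_val l).
Proof. by rewrite -tnth_nth tnth_mktuple. Qed.

Lemma free_monomials : free monomials.
Proof.
apply/freeP => k k_rel l0; pose K0 := enum_val l0.
have extract_nat (K : {ffun 'I_n -> 'I_4}) :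
    extract_seq K0 (index_enum 'I_n) (monomial K) =
    (\prod_(i < n) ((K0 i == K i)%:R * (d i * (4 * a i + 1)) ^+ 2)) *: 1.
  exact/extract_seq_prod/index_enum_uniq.
have := congr1 (extract_seq K0 (index_enum 'I_n)) k_rel.
rewrite linear_sum linear0 /=.
under eq_bigr do rewrite monomialsE linearZ /= extract_nat scalerA.
rewrite -scaler_suml => /eqP; rewrite scaler_eq0 oner_eq0 orbF.
rewrite (bigD1 l0) //= [X in _ + X]big1 ?addr0 => [|l l_neq0].
  rewrite mulf_eq0 prodf_seq_eq0 => /orP[/eqP //|/hasP[i _ /=]].
  have four0 : 4%:R = 0 :> F by rewrite -[4%N]/(2 * 2)%N natrM two0 mul0r.
  by rewrite eqxx mul1r four0 mul0r add0r mulr1 expf_eq0 (negbTE (d_neq0 i)) andbF.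
have /existsP[i K0_i] : [exists i, K0 i != enum_val l i].
  rewrite -negb_forall; apply: contra l_neq0 => /forallP eqK.
  by apply/eqP/esym/enum_val_inj/ffunP => i; apply/eqP/eqK.
by rewrite (bigD1 i) //= (negbTE K0_i) !mul0r mulr0.
Qed.

Lemma basis_monomials : basis_of fullv monomials.
Proof. by rewrite basisEfree free_monomials subvf size_tuple dimA card_ffun !card_ord leqnn. Qed.

Lemma monomials_expand y : y = \sum_(l < N) coord monomials l y *: monomials`_l.
Proof. exact: (coord_basis basis_monomials (memvf y)). Qed.

Definition quat_sym (x : quat F) : quat F := Quat (q0 x) (q1 x) (q2 x + q3 x) (- q3 x).

Lemma sigma_E i x : sigma (E i x) = E i (quat_sym x).
Proof.
rewrite !qembE /= !linearD !linearZ /= sigma1 sigmaM sigma_s sigma_z zs.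
by rewrite scalerBr scalerDl scaleNr !addrA.
Qed.

Lemma sigma_prod_E (r : seq 'I_n) (f : 'I_n -> quat F) : uniq r ->
  sigma (\prod_(i <- r) E i (f i)) = \prod_(i <- r) E i (quat_sym (f i)).
Proof.
elim: r => [|i r IH]; first by rewrite !big_nil sigma1.
by case/andP=> i_r r_uniq; rewrite !big_cons sigmaM IH // sigma_E; apply/esym/comm_E_prod.
Qed.

Definition quat_phi (c : F) (x : quat F) : F := q0 x + c * q1 x.

(* phi is the tensor product of the functionals quat_phi (a i) on the factors. *)
Definition phi (y : A) : F :=
  \sum_(l < N) coord monomials l y * \prod_(i < n) quat_phi (a i) (quat_unit (enum_val l i)).

Fact phi_is_scalar : scalar phi.
Proof.
move=> c y y'; rewrite /phi mulr_sumr -big_split; apply: eq_bigr => l _.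
by rewrite linearP mulrDl mulrA.
Qed.
HB.instance Definition _ := GRing.isLinear.Build F A F *%R phi phi_is_scalar.

Lemma phi_monomial K : phi (monomial K) = \prod_(i < n) quat_phi (a i) (quat_unit (K i)).
Proof.
rewrite -(enum_rankK K) -monomialsE /phi.
under eq_bigr do rewrite coord_free ?free_monomials //.
rewrite (bigD1 (enum_rank K)) //= eqxx mul1r [X in _ + X]big1 ?addr0 // => l.
by rewrite eq_sym => /negbTE->; rewrite mul0r.
Qed.

Lemma phi_prod (f : 'I_n -> quat F) :
  phi (\prod_(i < n) E i (f i)) = \prod_(i < n) quat_phi (a i) (f i).
Proof.
rewrite prod_E_monomials linear_sum.
under eq_bigr do rewrite linearZ /= phi_monomial -big_split /=.
rewrite -(bigA_distr_bigA (fun i (k : 'I_4) => quat_coord k (f i) * quat_phi (a i) (quat_unit k))).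
apply: eq_bigr => i _; rewrite !big_ord_recl big_ord0 /quat_phi /=.
by case: (f i) => ? ? ? ? /=; ring.
Qed.

Lemma phi1 : phi 1 = 1.
Proof.
have -> : 1 = \prod_(i < n) E i (Quat 1 0 0 0) by rewrite big1 // => i _; rewrite qemb1.
by rewrite phi_prod big1 // => i _; rewrite /quat_phi /= mulr0 addr0.
Qed.

Lemma phi_sigma y : phi (sigma y) = phi y.
Proof.
rewrite [in LHS](monomials_expand y) [in RHS](monomials_expand y) !linear_sum.
apply: eq_bigr => l _; rewrite !linearZ /= monomialsE /monomial.
by rewrite sigma_prod_E ?index_enum_uniq // !phi_prod.
Qed.

Definition qf (y : A) : F := phi (sigma y * y).

(* The cross terms phi (sigma y * y') and phi (sigma y' * y) agree by phi_sigma,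
   so they cancel in characteristic 2. *)
Lemma qfD y y' : qf (y + y') = qf y + qf y'.
Proof.
rewrite /qf linearD /= !(mulrDl, mulrDr) !linearD /=.
have -> : sigma y' * y = sigma (sigma y * y') by rewrite sigmaM sigmaK.
by rewrite phi_sigma -addrA [X in _ + X]addrA addrr_pchar2 // add0r.
Qed.

Lemma qfZ c y : qf (c *: y) = c ^+ 2 * qf y.
Proof. by rewrite /qf linearZ /= -scalerAl -scalerAr scalerA linearZ /= expr2. Qed.

Lemma qf_sum (k : 'I_N -> F) :
  qf (\sum_(l < N) k l *: monomials`_l) = \sum_(l < N) k l ^+ 2 * qf monomials`_l.
Proof.
elim/big_rec2: _ => [|l y1 y2 _ <-]; last by rewrite qfD qfZ.
by rewrite /qf mulr0 linear0.
Qed.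

Lemma quat_phi_norm_unit i (k : 'I_4) :
  quat_phi (a i) (quat_mul (a i) (d i) (quat_sym (quat_unit k)) (quat_unit k)) =
  if k == 1 :> nat then 0 else if (2 <= k)%N then d i else 1.
Proof. by case: k => [[|[|[|[|k]]]] hk] //; rewrite /quat_phi /=; ring: two0. Qed.

Lemma qf_monomial K :
  qf (monomial K) =
  \prod_(i < n) if K i == 1 :> nat then 0 else if (2 <= K i)%N then d i else 1.
Proof.
rewrite /qf sigma_prod_E ?index_enum_uniq // mul_prod_E ?index_enum_uniq // phi_prod.
by apply: eq_bigr => i _; apply: quat_phi_norm_unit.
Qed.

Lemma pfister_represents_qf_monomial K : pfister_represents d (qf (monomial K)).
Proof.
rewrite qf_monomial; have [/existsP[i Ki]|no1] := boolP [exists i, K i == 1 :> nat].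
  by rewrite (bigD1 i) //= Ki mul0r; apply: pfister_represents0.
suff -> : \prod_(i < n) (if K i == 1 :> nat then 0 else if (2 <= K i)%N then d i else 1)
    = pfister_entry d [set i | (2 <= K i)%N] by apply: pfister_represents_entry.
rewrite /pfister_entry [RHS]big_mkcond; apply: eq_bigr => i _.
by rewrite inE; case: ifP => // Ki; case/existsP: no1; exists i.
Qed.

Lemma pfister_represents_qf y : pfister_represents d (qf y).
Proof.
rewrite (monomials_expand y) qf_sum; apply: pfister_represents_sum => // l _.
by apply: pfister_representsZ; rewrite monomialsE; apply: pfister_represents_qf_monomial.
Qed.

Lemma pfister_represents_of_alt (alpha : F) (m : nat) (x : 'I_m -> A) :
  Alt sigma (alpha%:A + \sum_(i < m) sigma (x i) * x i) -> pfister_represents d alpha.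
Proof.
case=> y alt_y; have := congr1 phi alt_y.
rewrite linearD linear_sum /= linearZ /= phi1 mulr1 linearB /= phi_sigma subrr.
move/eqP; rewrite addr_eq0 => /eqP ->; rewrite oppr_pchar2 //.
by apply: pfister_represents_sum => // i _; apply: pfister_represents_qf.
Qed.

End SymmetricPresentation.

End Char2Involution.

Theorem lemma4p8 (F : fieldType) (A : falgType F) (sigma : A -> A)
  (char2 : 2%N \in [pchar F])
  (Hinv : is_involution sigma) (Horth : orthogonal_inv sigma)
  (n : nat) (u v : 'I_n -> A) (a b : 'I_n -> F)
  (Hdec : totally_decomposed sigma u v a b)
  (d : 'I_n -> F) (Hd : forall i, represents_disc sigma (u i) (v i) (d i))
  (alpha : F) (m : nat) (x : 'I_m -> A)
  (Halt : Alt sigma (alpha%:A + \sum_(i < m) sigma (x i) * x i)) :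
  Q_pfister d alpha.
Proof.
case: Hinv => sigma_linear sigmaM sigmaK.
case: Hdec => quat_pairs sigma_stable comm_spans dimA.
have /fin_all_exists[s /fin_all_exists[z /fin_all_exists[a' gens]]] i :=
  let: conj sigma_u sigma_v := sigma_stable i in
  symmetric_quat_gens char2 sigma_linear sigmaM sigmaK Horth (quat_pairs i) sigma_u sigma_v (Hd i).
apply/Q_pfister_represents/(pfister_represents_of_alt char2 sigma_linear sigmaM sigmaK
  (s := s) (z := z) (a := a') _ _ _ _ _ _ _ dimA Halt).
1-3, 5-6: by move=> i; case: (gens i) => ? ? ? ? [].
  by move=> i; have [] := Hd i.
move=> i j ij; have [si zi _ _ _] := gens i; have [sj zj _ _ _] := gens j.
by split; apply: (comm_spans _ _ ij).
Qed.
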